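(* Let $G=(V,E)$ be a $D$-regular unweighted Ricci-flat graph with $D\ge2$, and assume $\mu(y)=\mu_0>0$ for all $y\in V$. Then $G$ satisfies CD$(F;0)$ with the CD-function $$F(a)=\frac{D}{\mu_0^2}\exp\Big(-\frac{\mu_0}{D}a\Big)\Big[\Upsilon\Big(\frac{2\mu_0}{D}a\Big)+(D-1)\,\Upsilon\Big(-\frac{2\mu_0}{D(D-1)}a\Big)\Big],\quad a\ge0;$$ that is, $F$ is a (strictly convex) CD-function, and for every $x\in V$ and every $v:V\to\mathbb R$ with $Lv(x)>0$ and $Lv(x)\ge Lv(y)$ for all $y\sim x$ one has $\Delta\Psi_{\Upsilon'}(v)(x)\ge F(Lv(x))$.
   Context: Unweighted means $w_{xy}=1$ for all edges; $D$-regular means every vertex has exactly $D$ neighbours. The Laplacian is $\Delta u(x)=\frac1{\mu(x)}\sum_{y\sim x}(u(y)-u(x))$, $L=-\Delta$, $\Psi_H(v)(x)=\frac1{\mu(x)}\sum_{y\sim x}H(v(y)-v(x))$, $\Upsilon(z)=e^z-1-z$, $\Upsilon'(z)=e^z-1$. A CD-function is a continuous $F:[0,\infty)\to[0,\infty)$ with $F(0)=0$, $F(x)/x$ strictly increasing on $(0,\infty)$, and $\int_1^\infty dr/F(r)<\infty$. A $D$-regular graph is Ricci-flat at $x$ if, with $N(x)=\{x\}\cup\{y:y\sim x\}$, there exist maps $\eta_1,\dots,\eta_D:N(x)\to V$ such that (i) $\eta_i(y)\sim y$ for all $i$ and $y\in N(x)$; (ii) $\eta_i(y)\ne\eta_j(y)$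 for $y\in N(x)$, $i\ne j$; (iii) for each $i$, the lists $(\eta_i(\eta_j(x)))_{j=1}^D$ and $(\eta_j(\eta_i(x)))_{j=1}^D$ coincide as multisets. $G$ is Ricci-flat if it is Ricci-flat at every vertex. *)

From Stdlib Require Import Reals Lra List Permutation.
Import ListNotations.
Open Scope R_scope.

Definition lsum {V : Type} (f : V -> R) (l : list V) : R :=
  fold_right Rplus 0 (map f l).

Definition simple_graph {V : Type} (adj : V -> V -> Prop) : Prop :=
  (forall x y, adj x y -> adj y x) /\ (forall x, ~ adj x x).

Definition D_regular {V : Type} (adj : V -> V -> Prop) (nb : V -> list V)
  (D : nat) : Prop :=
  forall x, NoDup (nb x) /\ length (nb x) = D /\
            (forall y, In y (nb x) <-> adj x y).

Definition in_N {V : Type} (adj : V -> V -> Prop) (x y : V) : Prop :=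
  y = x \/ adj x y.

Definition ricci_flat_at {V : Type} (adj : V -> V -> Prop) (D : nat) (x : V)
  : Prop :=
  exists eta : nat -> V -> V,
    (forall i y, (i < D)%nat -> in_N adj x y -> adj y (eta i y)) /\
    (forall i j y, (i < D)%nat -> (j < D)%nat -> i <> j -> in_N adj x y ->
        eta i y <> eta j y) /\
    (forall i, (i < D)%nat ->
        Permutation (map (fun j => eta i (eta j x)) (seq 0 D))
                    (map (fun j => eta j (eta i x)) (seq 0 D))).

Definition ricci_flat {V : Type} (adj : V -> V -> Prop) (D : nat) : Prop :=
  forall x, ricci_flat_at adj D x.

Definition Lap {V : Type} (nb : V -> list V) (mu : V -> R) (u : V -> R) (x : V)
  : R := / mu x * lsum (fun y => u y - u x) (nb x).

Definition Lop {V : Type} (nb : V -> list V) (mu : V -> R) (u : V -> R) (x : V)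
  : R := - Lap nb mu u x.

Definition Psi {V : Type} (nb : V -> list V) (mu : V -> R) (H : R -> R)
  (v : V -> R) (x : V) : R :=
  / mu x * lsum (fun y => H (v y - v x)) (nb x).

Definition Upsilon (z : R) : R := exp z - 1 - z.
Definition Upsilon' (z : R) : R := exp z - 1.

(* CD-function: continuous F : [0,∞) -> [0,∞), F(0) = 0, F(x)/x strictly
   increasing on (0,∞), and ∫_1^∞ dr/F(r) < ∞ (improper Riemann integral:
   integrable on every [1,b] and the integrals converge as b -> ∞). *)
Definition is_CD_function (F : R -> R) : Prop :=
  (forall x, 0 <= x -> limit1_in F (fun y => 0 <= y) (F x) x) /\
  (forall x, 0 <= x -> 0 <= F x) /\
  F 0 = 0 /\
  (forall x y, 0 < x -> x < y -> F x / x < F y / y) /\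
  (forall b, 1 <= b -> inhabited (Riemann_integrable (fun r => / F r) 1 b)) /\
  (exists l : R, forall eps, 0 < eps -> exists B, forall b,
      B <= b -> forall pr : Riemann_integrable (fun r => / F r) 1 b,
      Rabs (RiemannInt pr - l) < eps).

Definition strictly_convex_nonneg (F : R -> R) : Prop :=
  forall x y t, 0 <= x -> 0 <= y -> x <> y -> 0 < t < 1 ->
    F (t * x + (1 - t) * y) < t * F x + (1 - t) * F y.

Definition F_RF (D : nat) (mu0 : R) (a : R) : R :=
  INR D / mu0 ^ 2 * exp (- (mu0 / INR D) * a) *
  (Upsilon (2 * mu0 / INR D * a) +
   (INR D - 1) * Upsilon (- (2 * mu0 / (INR D * (INR D - 1))) * a)).

Definition satisfies_CD0 {V : Type} (adj : V -> V -> Prop) (nb : V -> list V)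
  (mu : V -> R) (F : R -> R) : Prop :=
  forall (x : V) (v : V -> R),
    0 < Lop nb mu v x ->
    (forall y, adj x y -> Lop nb mu v y <= Lop nb mu v x) ->
    Lap nb mu (Psi nb mu Upsilon' v) x >= F (Lop nb mu v x).

From Stdlib Require Import Reals RList List Lra Lia Permutation Wf_nat.
From Stdlib Require Import FunctionalExtensionality Classical.
From Coquelicot Require Import Coquelicot.
Open Scope R_scope.

(* Write a_j = v(eta_j x) - v(x) and n = D - 1.  Ricci-flatness turns mu0^2 ΔΨ_{Υ'}(v)(x) into
   Σ_j e^{a_j} (R_j - D), where R_j is a sum of D exponentials whose exponents have nonnegative
   sum (this is where the maximality of Lv(x) enters) and one of which, coming from the edge
   back to x, has exponent -(a_j + a_{r j}) for a permutation r of the indices.  Jensen on the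
   remaining n terms gives e^{a_j} (R_j - D) >= G(a_j, a_{r j}) with G(x, y) = e^x φ(x + y),
   φ(s) = e^{-s} + n e^{s/n} - (n + 1) >= 0.  As G is supermodular, a sum of G over a
   permutation is smallest when extreme values are paired, and G(x, y) + G(y, x) >=
   2 ψ((x + y)/2) for ψ(t) = G(t, t); the tangent line of the convex function ψ at the mean of
   the a_j then gives Σ_j G(a_j, a_{r j}) >= D ψ(mean a), which is mu0^2 F(Lv(x)).  F is a
   rescaling of ψ, so it is strictly convex, and it grows exponentially, so 1/F is integrable
   at infinity. *)

Lemma exp_ge_tangent (q z : R) : 0 < q -> q * (1 + z - ln q) <= exp z.
Proof.
  intros Hq.
  replace (exp z) with (q * exp (z - ln q)).
  - apply Rmult_le_compat_l; [lra|]. pose proof (exp_ineq1_le (z - ln q)); lra.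
  - unfold Rminus. rewrite exp_plus, exp_Ropp, exp_ln by lra. field. lra.
Qed.

Lemma increasing_of_derivable_pos (f f' : R -> R) :
  (forall t, derivable_pt_lim f t (f' t)) -> (forall t, 0 < f' t) ->
  forall s t, s < t -> f s < f t.
Proof.
  intros Hf Hpos s t Hst.
  destruct (MVT_cor2 f f' s t Hst (fun c _ => Hf c)) as [c [Hc _]].
  pose proof (Hpos c). nra.
Qed.

Lemma tangent_lt_of_derivable_increasing (f f' : R -> R) :
  (forall t, derivable_pt_lim f t (f' t)) -> (forall s t, s < t -> f' s < f' t) ->
  forall m t, t <> m -> f m + f' m * (t - m) < f t.
Proof.
  intros Hf Hinc m t Htm.
  destruct (Rlt_or_le m t) as [Hmt | Htm'].
  - destruct (MVT_cor2 f f' m t Hmt (fun c _ => Hf c)) as [c [Hc [Hmc _]]].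
    pose proof (Hinc m c Hmc). nra.
  - assert (Htm'' : t < m) by lra.
    destruct (MVT_cor2 f f' t m Htm'' (fun c _ => Hf c)) as [c [Hc [_ Hcm]]].
    pose proof (Hinc c m Hcm). nra.
Qed.

Lemma convex_lt_of_tangent_lt (f f' : R -> R) :
  (forall m t, t <> m -> f m + f' m * (t - m) < f t) ->
  forall x y l, x <> y -> 0 < l < 1 ->
  f (l * x + (1 - l) * y) < l * f x + (1 - l) * f y.
Proof.
  intros Htan x y l Hxy Hl. set (z := l * x + (1 - l) * y).
  assert (Hx : x <> z) by (unfold z; intro E; apply Hxy; nra).
  assert (Hy : y <> z) by (unfold z; intro E; apply Hxy; nra).
  pose proof (Htan z x Hx) as Tx. pose proof (Htan z y Hy) as Ty.
  assert (Hz : l * (x - z) + (1 - l) * (y - z) = 0) by (unfold z; ring).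
  assert (l * (f z + f' z * (x - z)) < l * f x) by (apply Rmult_lt_compat_l; lra).
  assert ((1 - l) * (f z + f' z * (y - z)) < (1 - l) * f y) by (apply Rmult_lt_compat_l; lra).
  assert (l * (f z + f' z * (x - z)) + (1 - l) * (f z + f' z * (y - z))
          = f z + f' z * (l * (x - z) + (1 - l) * (y - z))) by ring.
  rewrite Hz in *. lra.
Qed.

Lemma exp_le_exp (x y : R) : x <= y -> exp x <= exp y.
Proof. intros [H | ->]; [left; apply exp_increasing, H | right; reflexivity]. Qed.

Definition phi (n s : R) : R := exp (- s) + n * exp (s / n) - (n + 1).

Lemma phi_nonneg (n s : R) : 0 < n -> 0 <= phi n s.
Proof.
  intros Hn. unfold phi.
  pose proof (exp_ineq1_le (- s)). pose proof (exp_ineq1_le (s / n)).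
  assert (n * (1 + s / n) <= n * exp (s / n)) by (apply Rmult_le_compat_l; lra).
  replace (n * (1 + s / n)) with (n + s) in * by (field; lra).
  lra.
Qed.

Definition G (n x y : R) : R :=
  exp (- y) + n * exp (x + (x + y) / n) - (n + 1) * exp x.

Lemma G_eq_exp_mul_phi (n x y : R) : 0 < n -> G n x y = exp x * phi n (x + y).
Proof.
  intros Hn. unfold G, phi.
  replace (exp (- y)) with (exp x * exp (- (x + y))) by (rewrite <- exp_plus; f_equal; ring).
  replace (exp (x + (x + y) / n)) with (exp x * exp ((x + y) / n))
    by (rewrite <- exp_plus; reflexivity).
  ring.
Qed.

Lemma G_supermodular (n x1 y1 x2 y2 : R) : 0 < n -> x2 <= x1 -> y2 <= y1 ->
  G n x1 y2 + G n x2 y1 <= G n x1 y1 + G n x2 y2.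
Proof.
  intros Hn Hx Hy. unfold G.
  assert (Hsplit : forall x y, exp (x + (x + y) / n) = exp (x + x / n) * exp (y / n)).
  { intros x y. rewrite <- exp_plus. f_equal. field. lra. }
  rewrite !Hsplit.
  assert (Hdiv : forall s t, s <= t -> s / n <= t / n).
  { intros s t Hst. apply Rmult_le_compat_r; [left; apply Rinv_0_lt_compat|]; lra. }
  assert (exp (x2 + x2 / n) <= exp (x1 + x1 / n)).
  { apply exp_le_exp. pose proof (Hdiv _ _ Hx). lra. }
  assert (exp (y2 / n) <= exp (y1 / n)) by (apply exp_le_exp, Hdiv, Hy).
  assert (0 <= n * ((exp (x1 + x1 / n) - exp (x2 + x2 / n)) * (exp (y1 / n) - exp (y2 / n)))).
  { apply Rmult_le_pos; [lra|]. apply Rmult_le_pos; lra. }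
  nra.
Qed.

Lemma G_mid_le (n x y : R) : 0 < n ->
  2 * G n ((x + y) / 2) ((x + y) / 2) <= G n x y + G n y x.
Proof.
  intros Hn. rewrite !G_eq_exp_mul_phi by exact Hn.
  replace ((x + y) / 2 + (x + y) / 2) with (x + y) by field.
  replace (y + x) with (x + y) by ring.
  pose proof (phi_nonneg n (x + y) Hn).
  assert (Hx : exp x = exp (x / 2) * exp (x / 2)) by (rewrite <- exp_plus; f_equal; field).
  assert (Hy : exp y = exp (y / 2) * exp (y / 2)) by (rewrite <- exp_plus; f_equal; field).
  assert (Hm : exp ((x + y) / 2) = exp (x / 2) * exp (y / 2))
    by (rewrite <- exp_plus; f_equal; field).
  assert (2 * exp ((x + y) / 2) <= exp x + exp y).
  { rewrite Hx, Hy, Hm. pose proof (pow2_ge_0 (exp (x / 2) - exp (y / 2))). nra. }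
  nra.
Qed.

Definition psi (n t : R) : R := G n t t.
Definition psi' (n t : R) : R :=
  - exp (- t) + (n + 2) * exp (t + (t + t) / n) - (n + 1) * exp t.
Definition psi'' (n t : R) : R :=
  exp (- t) + (n + 2) * (1 + 2 / n) * exp (t + (t + t) / n) - (n + 1) * exp t.

Lemma psi_derivable (n t : R) : 0 < n -> derivable_pt_lim (psi n) t (psi' n t).
Proof.
  intros Hn. apply is_derive_Reals. unfold psi, G, psi'.
  auto_derive; auto. unfold Rdiv. field. lra.
Qed.

Lemma psi'_derivable (n t : R) : 0 < n -> derivable_pt_lim (psi' n) t (psi'' n t).
Proof.
  intros Hn. apply is_derive_Reals. unfold psi', psi''.
  auto_derive; auto. unfold Rdiv. field. lra.
Qed.

Lemma psi_nonneg (n t : R) : 0 < n -> 0 <= psi n t.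
Proof.
  intros Hn. unfold psi. rewrite G_eq_exp_mul_phi by exact Hn.
  apply Rmult_le_pos; [left; apply exp_pos | apply phi_nonneg, Hn].
Qed.

Lemma psi''_pos (n t : R) : 0 < n -> 0 < psi'' n t.
Proof.
  intros Hn.
  (* psi'' exceeds psi >= 0 by ((n + 2)^2 / n - n) times an exponential *)
  assert (E : psi'' n t = psi n t + 4 * (n + 1) / n * exp (t + (t + t) / n)).
  { unfold psi'', psi, G. field. lra. }
  rewrite E. pose proof (psi_nonneg n t Hn). pose proof (exp_pos (t + (t + t) / n)).
  assert (0 < 4 * (n + 1) / n) by (apply Rdiv_lt_0_compat; lra).
  nra.
Qed.

Lemma psi_tangent_lt (n m t : R) : 0 < n -> t <> m -> psi n m + psi' n m * (t - m) < psi n t.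
Proof.
  intros Hn. apply tangent_lt_of_derivable_increasing.
  - intros s. apply psi_derivable, Hn.
  - apply (increasing_of_derivable_pos _ (psi'' n)).
    + intros s. apply psi'_derivable, Hn.
    + intros s. apply psi''_pos, Hn.
Qed.

Lemma psi_tangent_le (n m t : R) : 0 < n -> psi n m + psi' n m * (t - m) <= psi n t.
Proof.
  intros Hn. destruct (Req_dec t m) as [-> | Htm]; [lra|].
  left. apply psi_tangent_lt; assumption.
Qed.

Lemma psi_0 (n : R) : 0 < n -> psi n 0 = 0 /\ psi' n 0 = 0.
Proof.
  intros Hn. unfold psi, psi', G. replace (- 0) with 0 by ring.
  replace (0 + (0 + 0) / n) with 0 by (field; lra). rewrite exp_0. split; ring.
Qed.

Lemma psi_pos (n t : R) : 0 < n -> t <> 0 -> 0 < psi n t.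
Proof.
  intros Hn Ht. pose proof (psi_tangent_lt n 0 t Hn Ht) as H.
  destruct (psi_0 n Hn) as [E0 E0']. rewrite E0, E0' in H. lra.
Qed.

Lemma lsum_cons {A : Type} (f : A -> R) a l : lsum f (a :: l) = f a + lsum f l.
Proof. reflexivity. Qed.

Lemma lsum_perm {A : Type} (f : A -> R) l l' : Permutation l l' -> lsum f l = lsum f l'.
Proof.
  induction 1 as [| a l l' _ IH | a b l | l l' l'' _ IH1 _ IH2].
  - reflexivity.
  - rewrite !lsum_cons, IH; reflexivity.
  - rewrite !lsum_cons; ring.
  - rewrite IH1; exact IH2.
Qed.

Lemma lsum_map {A B : Type} (f : B -> R) (g : A -> B) l :
  lsum f (map g l) = lsum (fun a => f (g a)) l.
Proof. unfold lsum. rewrite map_map. reflexivity. Qed.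

Lemma lsum_le {A : Type} (f g : A -> R) l :
  (forall a, In a l -> f a <= g a) -> lsum f l <= lsum g l.
Proof.
  induction l as [| a l IH]; intros H; [unfold lsum; simpl; lra|].
  rewrite !lsum_cons. apply Rplus_le_compat; [apply H; left; reflexivity|].
  apply IH. intros b Hb. apply H. right. exact Hb.
Qed.

Lemma lsum_ext {A : Type} (f g : A -> R) l : (forall a, In a l -> f a = g a) -> lsum f l = lsum g l.
Proof.
  intros H. apply Rle_antisym; apply lsum_le; intros a Ha; rewrite H by exact Ha; lra.
Qed.

Lemma lsum_plus {A : Type} (f g : A -> R) l : lsum (fun a => f a + g a) l = lsum f l + lsum g l.
Proof. induction l; [unfold lsum; simpl; ring|]. rewrite !lsum_cons, IHl; ring. Qed.

Lemma lsum_minus {A : Type} (f g : A -> R) l : lsum (fun a => f a - g a) l = lsum f l - lsum g l.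
Proof. induction l; [unfold lsum; simpl; ring|]. rewrite !lsum_cons, IHl; ring. Qed.

Lemma lsum_scal {A : Type} (c : R) (f : A -> R) l : lsum (fun a => c * f a) l = c * lsum f l.
Proof. induction l; [unfold lsum; simpl; ring|]. rewrite !lsum_cons, IHl; ring. Qed.

Lemma lsum_const {A : Type} (c : R) (l : list A) : lsum (fun _ => c) l = INR (length l) * c.
Proof.
  induction l; [unfold lsum; simpl; ring|].
  rewrite lsum_cons, IHl. cbn [length]. rewrite S_INR. ring.
Qed.

Lemma lsum_comm {A B : Type} (f : A -> B -> R) l1 l2 :
  lsum (fun a => lsum (fun b => f a b) l2) l1 = lsum (fun b => lsum (fun a => f a b) l1) l2.
Proof.
  induction l1 as [| a l1 IH].
  - unfold lsum at 1. simpl. symmetry.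
    rewrite (lsum_ext _ (fun _ => 0)) by reflexivity. rewrite lsum_const. ring.
  - rewrite lsum_cons, IH, <- lsum_plus. apply lsum_ext. intros b _. reflexivity.
Qed.

Lemma Permutation_cons_of_In {A : Type} (a : A) (l : list A) :
  In a l -> exists l', Permutation l (a :: l').
Proof.
  intros H. destruct (in_split a l H) as [l1 [l2 ->]].
  exists (l1 ++ l2). symmetry. apply Permutation_middle.
Qed.

(* Jensen for exp on the N entries of l other than z0, whose mean is at least - z0 / N. *)
Lemma lsum_exp_ge (l : list R) (z0 : R) (N : nat) :
  (1 <= N)%nat -> In z0 l -> length l = S N -> 0 <= lsum (fun z => z) l ->
  exp z0 + INR N * exp (- z0 / INR N) <= lsum exp l.
Proof.
  intros HN Hin Hlen Hsum.
  destruct (Permutation_cons_of_In z0 l Hin) as [l' Hperm].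
  rewrite (lsum_perm _ _ _ Hperm), lsum_cons in Hsum.
  rewrite (lsum_perm _ _ _ Hperm), lsum_cons.
  assert (Hlen' : length l' = N).
  { apply Permutation_length in Hperm. simpl in Hperm. lia. }
  assert (HNpos : 0 < INR N) by (apply lt_0_INR; lia).
  set (p := exp (- z0 / INR N)).
  assert (Hp : 0 < p) by apply exp_pos.
  assert (Hlnp : ln p = - z0 / INR N) by apply ln_exp.
  assert (Htan : lsum (fun z => p * (1 + z - ln p)) l' <= lsum exp l')
    by (apply lsum_le; intros z _; apply exp_ge_tangent, Hp).
  assert (E : lsum (fun z => p * (1 + z - ln p)) l' = p * (INR N + lsum (fun z => z) l' + z0)).
  { rewrite lsum_scal, lsum_minus, lsum_plus, !lsum_const, Hlen', Hlnp. field. lra. }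
  assert (p * INR N <= p * (INR N + lsum (fun z => z) l' + z0))
    by (apply Rmult_le_compat_l; lra).
  lra.
Qed.

Lemma MinRlist_In (l : list R) : l <> nil -> In (MinRlist l) l.
Proof.
  induction l as [| a l IH]; intros Hne; [congruence|].
  destruct l as [| b l]; [left; reflexivity|].
  change (In (Rmin a (MinRlist (b :: l))) (a :: b :: l)).
  unfold Rmin. destruct (Rle_dec a (MinRlist (b :: l))).
  - left; reflexivity.
  - right. apply IH. discriminate.
Qed.

(* A supermodular cost is minimised over matchings of a multiset with itself by pairing
   extreme values; this bounds it below by a sum over pairs (M, s), (s, M) and fixed points. *)
Section Matching.
Variables (g : R -> R -> R) (T : R -> R).
Hypothesis g_supermodular :
  forall x1 y1 x2 y2, x2 <= x1 -> y2 <= y1 -> g x1 y2 + g x2 y1 <= g x1 y1 + g x2 y2.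
Hypothesis T_le_diag : forall t, T t <= g t t.
Hypothesis T_le_sym : forall x y, T x + T y <= g x y + g y x.

Let cost (p : R * R) : R := g (fst p) (snd p).

Lemma exchange_pair (l : list (R * R)) (x0 y0 : R) :
  In x0 (map fst l) -> In y0 (map snd l) ->
  (forall u w, In (x0, u) l -> In (w, y0) l -> g x0 y0 + g w u <= g x0 u + g w y0) ->
  exists l', Permutation (x0 :: map fst l') (map fst l) /\
             Permutation (y0 :: map snd l') (map snd l) /\
             g x0 y0 + lsum cost l' <= lsum cost l.
Proof.
  intros Hx0 Hy0 Hexch.
  apply in_map_iff in Hx0 as [[x u] [Hx Hxu]]. simpl in Hx. subst x.
  apply in_map_iff in Hy0 as [[w y] [Hy Hwy]]. simpl in Hy. subst y.
  destruct (Permutation_cons_of_In _ _ Hxu) as [l1 Hl1].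
  destruct (Permutation_in _ Hl1 Hwy) as [E | Hwy1].
  - injection E as -> ->. exists l1.
    split; [|split]; [symmetry; exact (Permutation_map _ Hl1) .. |].
    rewrite (lsum_perm _ _ _ Hl1), lsum_cons. unfold cost. simpl. lra.
  - destruct (Permutation_cons_of_In _ _ Hwy1) as [l2 Hl2].
    assert (Hl : Permutation l ((x0, u) :: (w, y0) :: l2)) by (rewrite Hl1; apply perm_skip, Hl2).
    exists ((w, u) :: l2). split; [|split].
    + rewrite Hl. reflexivity.
    + rewrite Hl. apply perm_swap.
    + rewrite (lsum_perm _ _ _ Hl), !lsum_cons. unfold cost. simpl.
      specialize (Hexch u w Hxu Hwy). lra.
Qed.

Lemma lsum_le_lsum_matching (l : list (R * R)) :
  Permutation (map fst l) (map snd l) -> lsum T (map fst l) <= lsum cost l.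
Proof.
  remember (length l) as k eqn:Hk. revert l Hk.
  induction k as [k IH] using lt_wf_ind. intros l -> Hbal.
  destruct l as [| p0 l0]; [unfold lsum; simpl; lra|].
  set (l := p0 :: l0).
  set (M := MaxRlist (map fst l)). set (s := MinRlist (map fst l)).
  assert (HM : In M (map fst l)) by (apply MaxRlist_P2; exists (fst p0); left; reflexivity).
  assert (Hs : In s (map fst l)) by (apply MinRlist_In; discriminate).
  assert (Hrange : forall z, In z (map snd l) -> s <= z <= M).
  { intros z Hz. apply (Permutation_in _ (Permutation_sym Hbal)) in Hz.
    split; [apply MinRlist_P1 | apply MaxRlist_P1]; exact Hz. }
  destruct (exchange_pair l M s HM (Permutation_in _ Hbal Hs)) as [l1 [HF1 [HS1 Hcost1]]].
  { intros u w Hu Hw. apply (in_map snd) in Hu. apply (in_map fst) in Hw.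
    apply Hrange in Hu. pose proof (MaxRlist_P1 _ _ Hw : w <= M).
    apply g_supermodular; simpl in Hu; lra. }
  assert (Hlen1 : (length l1 < length l)%nat).
  { apply Permutation_length in HF1. cbn [length] in HF1. rewrite !length_map in HF1. lia. }
  assert (Hbal1 : Permutation (M :: map fst l1) (s :: map snd l1))
    by (apply (perm_trans HF1), (perm_trans Hbal), Permutation_sym, HS1).
  rewrite <- (lsum_perm _ _ _ HF1), lsum_cons.
  destruct (Req_dec M s) as [<- | HMs].
  - apply Permutation_cons_inv in Hbal1.
    pose proof (IH _ Hlen1 l1 eq_refl Hbal1). pose proof (T_le_diag M). lra.
  - assert (Hs1 : In s (map fst l1)).
    { destruct (Permutation_in _ (Permutation_sym Hbal1) (in_eq s _)) as [E | H];
        [congruence | exact H]. }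
    assert (HM1 : In M (map snd l1)).
    { destruct (Permutation_in _ Hbal1 (in_eq M _)) as [E | H]; [congruence | exact H]. }
    destruct (exchange_pair l1 s M Hs1 HM1) as [l2 [HF2 [HS2 Hcost2]]].
    { intros u w Hu Hw. apply (in_map snd) in Hu. apply (in_map fst) in Hw.
      assert (Hu' : u <= M) by (apply Hrange, (Permutation_in _ HS1), in_cons, Hu).
      assert (Hw' : s <= w) by (apply MinRlist_P1, (Permutation_in _ HF1), in_cons, Hw).
      pose proof (g_supermodular w M s u Hw' Hu'). lra. }
    assert (Hlen2 : (length l2 < length l)%nat).
    { apply Permutation_length in HF2. cbn [length] in HF2. rewrite !length_map in HF2. lia. }
    assert (Hbal2 : Permutation (map fst l2) (map snd l2)).
    { apply (Permutation_cons_inv (a := s)), (Permutation_cons_inv (a := M)).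
      apply (perm_trans (perm_skip M HF2)), (perm_trans Hbal1).
      apply (perm_trans (perm_skip s (Permutation_sym HS2))), perm_swap. }
    rewrite <- (lsum_perm _ _ _ HF2), lsum_cons.
    pose proof (IH _ Hlen2 l2 eq_refl Hbal2). pose proof (T_le_sym M s). lra.
Qed.

End Matching.

Section ExponentialSums.
Variables (A : Type) (I : list A) (a : A -> R) (b : A -> A -> R) (r : A -> A).
Hypothesis length_I : (2 <= length I)%nat.
Hypothesis sum_a_le : forall j, In j I -> lsum a I <= lsum (b j) I.
Hypothesis r_back : forall j, In j I -> In (r j) I /\ b j (r j) = - a j.
Hypothesis r_perm : Permutation I (map r I).

Let n := INR (length I) - 1.

Lemma length_sub_one_ge_one : 1 <= n.
Proof.
  unfold n. assert (H : INR 2 <= INR (length I)) by (apply le_INR, length_I).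
  simpl in H. lra.
Qed.

Lemma row_exp_sum_ge (j : A) : In j I ->
  exp (- (a j + a (r j))) + n * exp ((a j + a (r j)) / n)
    <= lsum (fun i => exp (b j i - a i)) I.
Proof.
  intros Hj. destruct (r_back j Hj) as [Hrj Hbj].
  pose proof length_sub_one_ge_one as Hn.
  assert (HN : INR (length I - 1) = n) by (rewrite minus_INR by lia; reflexivity).
  pose proof (lsum_exp_ge (map (fun i => b j i - a i) I) (- (a j + a (r j))) (length I - 1))
    as H.
  rewrite HN, (lsum_map exp) in H.
  replace (- - (a j + a (r j)) / n) with ((a j + a (r j)) / n) in H by (field; lra).
  apply H.
  - lia.
  - apply in_map_iff. exists (r j). split; [rewrite Hbj; ring | exact Hrj].
  - rewrite length_map. lia.
  - rewrite lsum_map, lsum_minus. pose proof (sum_a_le j Hj). lra.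
Qed.

Lemma G_le_exp_row (j : A) : In j I ->
  G n (a j) (a (r j)) <= exp (a j) * (lsum (fun i => exp (b j i - a i)) I - INR (length I)).
Proof.
  intros Hj. pose proof length_sub_one_ge_one as Hn.
  rewrite G_eq_exp_mul_phi by lra. unfold phi.
  apply Rmult_le_compat_l; [left; apply exp_pos|].
  pose proof (row_exp_sum_ge j Hj). unfold n in *. lra.
Qed.

Lemma psi_mean_le_exp_sum :
  INR (length I) * psi n (lsum a I / INR (length I))
    <= lsum (fun j => exp (a j) * (lsum (fun i => exp (b j i - a i)) I - INR (length I))) I.
Proof.
  pose proof length_sub_one_ge_one as Hn.
  set (m := lsum a I / INR (length I)).
  set (T := fun t => psi n m + psi' n m * (t - m)).
  set (l := map (fun j => (a j, a (r j))) I).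
  assert (Hmatch : lsum T (map fst l) <= lsum (fun p => G n (fst p) (snd p)) l).
  { apply lsum_le_lsum_matching.
    - intros x1 y1 x2 y2. apply G_supermodular. lra.
    - intros t. apply psi_tangent_le. lra.
    - intros x y. pose proof (psi_tangent_le n m ((x + y) / 2) ltac:(lra)).
      pose proof (G_mid_le n x y ltac:(lra)). unfold T, psi in *. lra.
    - unfold l. rewrite !map_map. cbn [fst snd].
      rewrite <- (map_map r a). apply Permutation_map, r_perm. }
  assert (HT : lsum T (map fst l) = INR (length I) * psi n m).
  { unfold l. rewrite map_map, lsum_map. cbn [fst]. unfold T.
    rewrite lsum_plus, lsum_scal, lsum_minus, !lsum_const. unfold m. field. unfold n in Hn. lra. }
  rewrite <- HT. apply (Rle_trans _ _ _ Hmatch).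
  unfold l. rewrite lsum_map. apply lsum_le. intros j Hj. apply G_le_exp_row, Hj.
Qed.

End ExponentialSums.

Lemma nat_finite_choice (P : nat -> nat -> Prop) (D : nat) :
  (forall j, (j < D)%nat -> exists i, P j i) ->
  exists r : nat -> nat, forall j, (j < D)%nat -> P j (r j).
Proof.
  induction D as [| D IH]; intros H.
  - exists (fun _ => 0%nat). intros j Hj. lia.
  - destruct IH as [r Hr]; [intros j Hj; apply H; lia|].
    destruct (H D ltac:(lia)) as [i Hi].
    exists (fun j => if Nat.eqb j D then i else r j).
    intros j Hj. destruct (Nat.eqb_spec j D) as [-> | Hne]; [exact Hi|].
    apply Hr. lia.
Qed.

Section RicciFlatVertex.
Variables (V : Type) (adj : V -> V -> Prop) (nb : V -> list V) (D : nat).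
Hypothesis adj_sym : forall y z, adj y z -> adj z y.
Hypothesis regular : D_regular adj nb D.
Variables (x : V) (eta : nat -> V -> V).
Hypothesis eta_adj : forall i y, (i < D)%nat -> in_N adj x y -> adj y (eta i y).
Hypothesis eta_inj : forall i j y, (i < D)%nat -> (j < D)%nat -> i <> j ->
  in_N adj x y -> eta i y <> eta j y.

Let idx := seq 0 D.

Hypothesis eta_comm : forall i, (i < D)%nat ->
  Permutation (map (fun j => eta i (eta j x)) idx) (map (fun j => eta j (eta i x)) idx).

Lemma length_idx : length idx = D.
Proof. apply length_seq. Qed.

Lemma in_idx (i : nat) : In i idx <-> (i < D)%nat.
Proof. unfold idx. rewrite in_seq. lia. Qed.

Lemma in_N_eta (j : nat) : (j < D)%nat -> in_N adj x (eta j x).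
Proof. intros Hj. right. apply eta_adj; [exact Hj | left; reflexivity]. Qed.

Lemma eta_enumerates_nb (y : V) : in_N adj x y -> Permutation (map (fun i => eta i y) idx) (nb y).
Proof.
  intros Hy. destruct (regular y) as [Hnd [Hlen Hnb]].
  apply NoDup_Permutation_bis.
  - apply NoDup_map_NoDup_ForallPairs; [|apply seq_NoDup].
    intros i j Hi Hj E. apply in_idx in Hi, Hj.
    destruct (Nat.eq_dec i j) as [e | ne]; [exact e|].
    exfalso. exact (eta_inj i j y Hi Hj ne Hy E).
  - rewrite length_map, length_idx, Hlen. reflexivity.
  - intros z Hz. apply in_map_iff in Hz as [i [<- Hi]].
    apply Hnb, eta_adj; [apply in_idx, Hi | exact Hy].
Qed.

Lemma lsum_nb (y : V) (f : V -> R) :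
  in_N adj x y -> lsum f (nb y) = lsum (fun i => f (eta i y)) idx.
Proof. intros Hy. rewrite <- (lsum_perm _ _ _ (eta_enumerates_nb y Hy)), lsum_map. reflexivity. Qed.

Lemma x_in_nb_eta (j : nat) : (j < D)%nat -> In x (map (fun i => eta i (eta j x)) idx).
Proof.
  intros Hj. apply (Permutation_in _ (Permutation_sym (eta_enumerates_nb _ (in_N_eta j Hj)))).
  destruct (regular (eta j x)) as [_ [_ Hnb]].
  apply Hnb, adj_sym, eta_adj; [exact Hj | left; reflexivity].
Qed.

(* r j indexes the edge from eta j x back to x; Ricci-flatness makes r a permutation. *)
Lemma back_edge_permutation : exists r : nat -> nat,
  (forall j, (j < D)%nat -> (r j < D)%nat /\ eta (r j) (eta j x) = x) /\
  Permutation idx (map r idx).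
Proof.
  destruct (nat_finite_choice (fun j i => (i < D)%nat /\ eta i (eta j x) = x) D) as [r Hr].
  { intros j Hj. pose proof (x_in_nb_eta j Hj) as Hx. apply in_map_iff in Hx as [i [Ei Hi]].
    exists i. split; [apply in_idx, Hi | exact Ei]. }
  exists r. split; [exact Hr|].
  apply NoDup_Permutation_bis; [apply seq_NoDup | rewrite length_map; lia |].
  intros i Hi. apply in_idx in Hi.
  pose proof (Permutation_in _ (Permutation_sym (eta_comm i Hi)) (x_in_nb_eta i Hi)) as Hx.
  apply in_map_iff in Hx as [k [Ek Hk]].
  apply in_map_iff. exists k. split; [|exact Hk].
  apply in_idx in Hk. destruct (Hr k Hk) as [Hrk Erk].
  destruct (Nat.eq_dec (r k) i) as [e | ne]; [exact e|].
  exfalso. apply (eta_inj (r k) i (eta k x) Hrk Hi ne (in_N_eta k Hk)). congruence.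
Qed.

Variables (mu : V -> R) (mu0 : R) (v : V -> R).
Hypothesis mu_const : forall y, mu y = mu0.

Let dv1 (j : nat) : R := v (eta j x) - v x.
Let dv2 (j i : nat) : R := v (eta i (eta j x)) - v (eta j x).

Lemma Lop_center : Lop nb mu v x = - (/ mu0 * lsum dv1 idx).
Proof. unfold Lop, Lap. rewrite mu_const, lsum_nb by (left; reflexivity). reflexivity. Qed.

Lemma Lop_neighbour (j : nat) : (j < D)%nat -> Lop nb mu v (eta j x) = - (/ mu0 * lsum (dv2 j) idx).
Proof.
  intros Hj. unfold Lop, Lap. rewrite mu_const, lsum_nb by (apply in_N_eta, Hj). reflexivity.
Qed.

Lemma lsum_exp_dv2_comm :
  lsum (fun i => lsum (fun j => exp (dv2 i j)) idx) idx
  = lsum (fun j => exp (dv1 j) * lsum (fun i => exp (dv2 j i - dv1 i)) idx) idx.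
Proof.
  transitivity (lsum (fun i => lsum (fun j => exp (dv1 j + dv2 j i - dv1 i)) idx) idx).
  - apply lsum_ext. intros i Hi. apply in_idx in Hi.
    pose proof (lsum_perm (fun z => exp (- dv1 i) * exp (v z - v x)) _ _ (eta_comm i Hi)) as H.
    rewrite !lsum_map in H.
    rewrite (lsum_ext _ (fun j => exp (- dv1 i) * exp (v (eta j (eta i x)) - v x)))
      by (intros j _; rewrite <- exp_plus; f_equal; unfold dv1, dv2; ring).
    rewrite <- H. apply lsum_ext. intros j _.
    rewrite <- exp_plus. f_equal. unfold dv1, dv2. ring.
  - rewrite lsum_comm. apply lsum_ext. intros j _. rewrite <- lsum_scal.
    apply lsum_ext. intros i _. rewrite <- exp_plus. f_equal. ring.
Qed.

Lemma Lap_Psi_center :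
  Lap nb mu (Psi nb mu Upsilon' v) x
  = / mu0 * / mu0 *
    lsum (fun j => exp (dv1 j) * (lsum (fun i => exp (dv2 j i - dv1 i)) idx - INR D)) idx.
Proof.
  pose proof length_idx as Hlen.
  unfold Lap. rewrite mu_const, lsum_nb by (left; reflexivity).
  rewrite (lsum_ext _ (fun i => / mu0 *
    (lsum (fun j => exp (dv2 i j)) idx - lsum (fun j => exp (dv1 j)) idx))).
  - rewrite lsum_scal, lsum_minus, lsum_exp_dv2_comm, lsum_const, Hlen.
    rewrite <- (lsum_scal (INR D)), <- lsum_minus, Rmult_assoc. do 2 f_equal.
    apply lsum_ext. intros j _. ring.
  - intros i Hi. apply in_idx in Hi. unfold Psi, Upsilon'.
    rewrite !mu_const, (lsum_nb (eta i x)) by (apply in_N_eta, Hi).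
    rewrite lsum_nb by (left; reflexivity).
    rewrite !lsum_minus, !lsum_const, Hlen. unfold dv1, dv2. ring.
Qed.

Lemma Lap_Psi_ge_psi : (2 <= D)%nat -> 0 < mu0 ->
  (forall y, adj x y -> Lop nb mu v y <= Lop nb mu v x) ->
  INR D / mu0 ^ 2 * psi (INR D - 1) (- (mu0 / INR D) * Lop nb mu v x)
    <= Lap nb mu (Psi nb mu Upsilon' v) x.
Proof.
  intros HD Hmu0 Hmax.
  pose proof length_idx as Hlen.
  assert (HD' : 2 <= INR D) by (apply (le_INR 2) in HD; exact HD).
  destruct back_edge_permutation as [r [Hr Hperm]].
  pose proof (psi_mean_le_exp_sum nat idx dv1 dv2 r) as H.
  rewrite Hlen in H.
  rewrite Lap_Psi_center, Lop_center.
  replace (- (mu0 / INR D) * - (/ mu0 * lsum dv1 idx)) with (lsum dv1 idx / INR D) by (field; lra).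
  replace (INR D / mu0 ^ 2) with (/ mu0 * / mu0 * INR D) by (field; lra).
  rewrite Rmult_assoc. apply Rmult_le_compat_l.
  { left. apply Rmult_lt_0_compat; apply Rinv_0_lt_compat, Hmu0. }
  apply H.
  - exact HD.
  - intros j Hj. apply in_idx in Hj.
    pose proof (Hmax _ (eta_adj j x Hj (or_introl eq_refl))) as Hj'.
    rewrite Lop_center, (Lop_neighbour j Hj) in Hj'.
    apply (Rmult_le_reg_l (/ mu0)); [apply Rinv_0_lt_compat, Hmu0 | lra].
  - intros j Hj. apply in_idx in Hj. destruct (Hr j Hj) as [Hrj Erj].
    split; [apply in_idx, Hrj|]. unfold dv1, dv2. rewrite Erj. ring.
  - exact Hperm.
Qed.

End RicciFlatVertex.

Lemma limit1_in_of_continuity_pt (f : R -> R) (D : R -> Prop) (x : R) :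
  continuity_pt f x -> limit1_in f D (f x) x.
Proof.
  intros Hf eps Heps. destruct (Hf eps Heps) as [alp [Halp Hclose]].
  exists alp. split; [exact Halp|]. intros y [_ Hyx].
  destruct (Req_dec y x) as [-> | Hne].
  - simpl. unfold R_dist. rewrite Rminus_diag, Rabs_R0. exact Heps.
  - apply Hclose. split; [split; [exact I | congruence] | exact Hyx].
Qed.

Lemma RiemannInt_nonneg (f : R -> R) (a b : R) (pr : Riemann_integrable f a b) :
  a <= b -> (forall t, a < t < b -> 0 <= f t) -> 0 <= RiemannInt pr.
Proof.
  intros Hab Hf.
  pose proof (RiemannInt_P19 (RiemannInt_P14 a b 0) pr Hab Hf) as H.
  rewrite RiemannInt_P15 in H. lra.
Qed.

Lemma RiemannInt_exp (A c a b : R) (pr : Riemann_integrable (fun r => A * exp (- c * r)) a b) :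
  0 < c -> RiemannInt pr = A / c * (exp (- c * a) - exp (- c * b)).
Proof.
  intros Hc. rewrite <- RInt_Reals. apply is_RInt_unique.
  set (h := fun r => - (A / c) * exp (- c * r)).
  replace (A / c * (exp (- c * a) - exp (- c * b))) with (minus (h b) (h a))
    by (unfold h, minus, plus, opp; simpl; field; lra).
  apply (is_RInt_derive h).
  - intros t _. unfold h. auto_derive; [exact I|]. field. lra.
  - intros t _. apply (ex_derive_continuous (K := R_AbsRing) (V := R_NormedModule)).
    auto_derive. exact I.
Qed.

(* A bounded nondecreasing family of integrals converges to its supremum. *)
Lemma improper_RiemannInt_cvg (f : R -> R) (a : R) :
  (forall b c, a <= b -> b <= c -> Riemann_integrable f b c) ->
  (forall t, a <= t -> 0 <= f t) ->
  (exists B, forall b (pr : Riemann_integrable f a b), a <= b -> RiemannInt pr <= B) ->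
  exists l, forall eps, 0 < eps -> exists b0, forall b, b0 <= b ->
    forall pr : Riemann_integrable f a b, Rabs (RiemannInt pr - l) < eps.
Proof.
  intros Hint Hpos [B HB].
  set (E := fun y => exists b, a <= b /\ exists pr : Riemann_integrable f a b, y = RiemannInt pr).
  destruct (completeness E) as [l [Hub Hlub]].
  - exists B. intros y [b [Hb [pr ->]]]. apply HB, Hb.
  - exists (RiemannInt (Hint a a (Rle_refl a) (Rle_refl a))).
    exists a. split; [lra|]. eexists; reflexivity.
  - exists l. intros eps Heps.
    destruct (classic (exists y, E y /\ l - eps < y)) as [[y [[b0 [Hb0 [pr0 ->]]] Hy]] | Hno].
    + exists b0. intros b Hb pr.
      pose proof (RiemannInt_P26 pr0 (Hint b0 b Hb0 Hb) pr) as Hsplit.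
      pose proof (RiemannInt_nonneg f b0 b (Hint b0 b Hb0 Hb) Hb (fun t Ht => Hpos t ltac:(lra))).
      assert (RiemannInt pr <= l) by (apply Hub; exists b; split; [lra | exists pr; reflexivity]).
      apply Rabs_def1; lra.
    + exfalso. assert (l <= l - eps); [|lra].
      apply Hlub. intros y Hy. apply Rnot_lt_le. intros Hlt. apply Hno. exists y. split; assumption.
Qed.

Definition F_psi (K c n a : R) : R := K * psi n (- c * a).

Section CDFunction.
Variables (K c n : R).
Hypotheses (K_pos : 0 < K) (c_pos : 0 < c) (n_pos : 0 < n).

Lemma F_psi_continuous (t : R) : continuity_pt (F_psi K c n) t.
Proof.
  apply continuity_pt_filterlim.
  apply (ex_derive_continuous (K := R_AbsRing) (V := R_NormedModule)).
  unfold F_psi, psi, G. auto_derive. exact I.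
Qed.

Lemma F_psi_pos (t : R) : 0 < t -> 0 < F_psi K c n t.
Proof.
  intros Ht. unfold F_psi. apply Rmult_lt_0_compat; [exact K_pos|].
  apply psi_pos; [exact n_pos|]. pose proof (Rmult_lt_0_compat c t c_pos Ht). lra.
Qed.

Lemma F_psi_0 : F_psi K c n 0 = 0.
Proof.
  unfold F_psi. replace (- c * 0) with 0 by ring.
  rewrite (proj1 (psi_0 n n_pos)). ring.
Qed.

Lemma F_psi_strictly_convex : strictly_convex_nonneg (F_psi K c n).
Proof.
  intros x y t _ _ Hxy Ht. unfold F_psi.
  replace (- c * (t * x + (1 - t) * y)) with (t * (- c * x) + (1 - t) * (- c * y)) by ring.
  assert (Hcxy : - c * x <> - c * y) by (intro E; apply Hxy; apply (Rmult_eq_reg_l (- c)); lra).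
  pose proof (convex_lt_of_tangent_lt (psi n) (psi' n) (fun m t => psi_tangent_lt n m t n_pos)
    _ _ t Hcxy Ht).
  replace (t * (K * psi n (- c * x)) + (1 - t) * (K * psi n (- c * y)))
    with (K * (t * psi n (- c * x) + (1 - t) * psi n (- c * y))) by ring.
  apply Rmult_lt_compat_l; assumption.
Qed.

Lemma F_psi_ratio_increasing (x y : R) : 0 < x -> x < y -> F_psi K c n x / x < F_psi K c n y / y.
Proof.
  intros Hx Hxy.
  assert (Hxy' : 0 < x / y < 1).
  { split; [apply Rdiv_lt_0_compat; lra|]. apply Rlt_div_l; lra. }
  pose proof (F_psi_strictly_convex y 0 (x / y) ltac:(lra) (Rle_refl 0) ltac:(lra) Hxy') as H.
  replace (x / y * y + (1 - x / y) * 0) with x in H by (field; lra).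
  rewrite F_psi_0 in H.
  apply (Rmult_lt_reg_r (x * y)); [nra|].
  replace (F_psi K c n x / x * (x * y)) with (F_psi K c n x * y) by (field; lra).
  replace (F_psi K c n y / y * (x * y)) with (x / y * F_psi K c n y * y) by (field; lra).
  apply Rmult_lt_compat_r; lra.
Qed.

Lemma inv_F_psi_integrable (a b : R) : 1 <= a -> a <= b ->
  Riemann_integrable (fun r => / F_psi K c n r) a b.
Proof.
  intros Ha Hab. apply continuity_implies_RiemannInt; [exact Hab|].
  intros t Ht. apply continuity_pt_inv; [apply F_psi_continuous|].
  pose proof (F_psi_pos t ltac:(lra)). lra.
Qed.

Lemma inv_F_psi_le_exp (t : R) : ln (2 * (n + 1)) / (2 * c) <= t ->
  / F_psi K c n t <= 2 / K * exp (- c * t).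
Proof.
  intros Ht.
  assert (Hexp2 : 2 * (n + 1) <= exp (c * t) * exp (c * t)).
  { rewrite <- exp_plus, <- (exp_ln (2 * (n + 1))) by lra. apply exp_le_exp.
    apply (Rmult_le_compat_l (2 * c)) in Ht; [|lra].
    replace (2 * c * (ln (2 * (n + 1)) / (2 * c))) with (ln (2 * (n + 1))) in Ht by (field; lra).
    lra. }
  assert (Hinv : exp (- c * t) * exp (c * t) = 1)
    by (rewrite <- exp_plus; replace (- c * t + c * t) with 0 by ring; apply exp_0).
  pose proof (exp_pos (c * t)). pose proof (exp_pos (- c * t)).
  pose proof (exp_pos (- c * t + (- c * t + - c * t) / n)).
  (* for large t the growing term e^{ct} of psi (-ct) dominates the negative one *)
  assert (Hlow : K * exp (c * t) / 2 <= F_psi K c n t).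
  { unfold F_psi, psi, G. replace (- (- c * t)) with (c * t) by ring.
    assert (Hdom : (n + 1) * exp (- c * t) <= exp (c * t) / 2).
    { apply (Rmult_le_reg_r (exp (c * t))); [lra|].
      replace ((n + 1) * exp (- c * t) * exp (c * t)) with (n + 1)
        by (rewrite Rmult_assoc, Hinv; ring).
      lra. }
    assert (0 <= n * exp (- c * t + (- c * t + - c * t) / n)) by (apply Rmult_le_pos; lra).
    replace (K * exp (c * t) / 2) with (K * (exp (c * t) / 2)) by field.
    apply Rmult_le_compat_l; lra. }
  replace (2 / K * exp (- c * t)) with (/ (K * exp (c * t) / 2)).
  - apply Rinv_le_contravar; [|exact Hlow]. apply Rmult_lt_0_compat; [nra | lra].
  - field_simplify_eq; [nra | split; lra].
Qed.

Lemma RiemannInt_inv_F_psi_bounded : exists B,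
  forall b (pr : Riemann_integrable (fun r => / F_psi K c n r) 1 b), 1 <= b -> RiemannInt pr <= B.
Proof.
  set (R1 := Rmax 1 (ln (2 * (n + 1)) / (2 * c))).
  assert (HR1 : 1 <= R1) by apply Rmax_l.
  assert (HR1' : ln (2 * (n + 1)) / (2 * c) <= R1) by apply Rmax_r.
  set (pr1 := inv_F_psi_integrable 1 R1 (Rle_refl 1) HR1).
  assert (Hinv_pos : forall t, 1 <= t -> 0 <= / F_psi K c n t)
    by (intros t Ht; left; apply Rinv_0_lt_compat, F_psi_pos; lra).
  assert (Hcoef : 0 < 2 / K / c) by (repeat apply Rdiv_lt_0_compat; lra).
  exists (RiemannInt pr1 + 2 / K / c * exp (- c * R1)).
  intros b pr Hb. pose proof (exp_pos (- c * R1)). pose proof (exp_pos (- c * b)).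
  destruct (Rle_dec b R1) as [HbR | HbR].
  - pose proof (RiemannInt_P26 pr (inv_F_psi_integrable b R1 Hb HbR) pr1) as Hsplit.
    pose proof (RiemannInt_nonneg _ b R1 (inv_F_psi_integrable b R1 Hb HbR) HbR
      (fun t Ht => Hinv_pos t ltac:(lra))).
    nra.
  - assert (HRb : R1 <= b) by lra.
    pose proof (RiemannInt_P26 pr1 (inv_F_psi_integrable R1 b HR1 HRb) pr) as Hsplit.
    assert (prg : Riemann_integrable (fun r => 2 / K * exp (- c * r)) R1 b).
    { apply continuity_implies_RiemannInt; [exact HRb|]. intros t _.
      apply derivable_continuous_pt. exists (2 / K * (- c * exp (- c * t))).
      apply is_derive_Reals. auto_derive; [exact I | ring]. }
    pose proof (RiemannInt_P19 (inv_F_psi_integrable R1 b HR1 HRb) prg HRb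
      (fun t Ht => inv_F_psi_le_exp t ltac:(lra))) as Htail.
    rewrite (RiemannInt_exp (2 / K) c R1 b prg c_pos) in Htail.
    nra.
Qed.

Lemma F_psi_is_CD_function : is_CD_function (F_psi K c n).
Proof.
  split; [|split; [|split; [|split; [|split]]]].
  - intros t _. apply limit1_in_of_continuity_pt, F_psi_continuous.
  - intros t _. unfold F_psi. apply Rmult_le_pos; [lra | apply psi_nonneg, n_pos].
  - exact F_psi_0.
  - exact F_psi_ratio_increasing.
  - intros b Hb. constructor. apply inv_F_psi_integrable; lra.
  - apply improper_RiemannInt_cvg.
    + intros b b' Hb Hbb'. apply inv_F_psi_integrable; assumption.
    + intros t Ht. left. apply Rinv_0_lt_compat, F_psi_pos. lra.
    + exact RiemannInt_inv_F_psi_bounded.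
Qed.

End CDFunction.

Lemma F_RF_eq_F_psi (D : nat) (mu0 : R) : (2 <= D)%nat -> 0 < mu0 ->
  F_RF D mu0 = F_psi (INR D / mu0 ^ 2) (mu0 / INR D) (INR D - 1).
Proof.
  intros HD Hmu0. apply functional_extensionality. intros a.
  assert (HD2 : 2 <= INR D) by (apply (le_INR 2) in HD; exact HD).
  unfold F_RF, F_psi, psi, G, Upsilon.
  set (t := - (mu0 / INR D) * a).
  replace (2 * mu0 / INR D * a) with (- (t + t)) by (unfold t; field; lra).
  replace (- (2 * mu0 / (INR D * (INR D - 1))) * a) with ((t + t) / (INR D - 1))
    by (unfold t; field; lra).
  replace (exp (- t)) with (exp t * exp (- (t + t))) by (rewrite <- exp_plus; f_equal; ring).
  replace (exp (t + (t + t) / (INR D - 1))) with (exp t * exp ((t + t) / (INR D - 1)))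
    by (rewrite <- exp_plus; reflexivity).
  field. lra.
Qed.

Theorem theorem3p11 (V : Type) (adj : V -> V -> Prop) (nb : V -> list V)
  (D : nat) (mu : V -> R) (mu0 : R) :
  simple_graph adj ->
  D_regular adj nb D ->
  ricci_flat adj D ->
  (2 <= D)%nat ->
  0 < mu0 ->
  (forall y, mu y = mu0) ->
  is_CD_function (F_RF D mu0) /\
  strictly_convex_nonneg (F_RF D mu0) /\
  satisfies_CD0 adj nb mu (F_RF D mu0).
Proof.
  intros [adj_sym _] Hreg Hrf HD Hmu0 Hmu.
  assert (HD2 : 2 <= INR D) by (apply (le_INR 2) in HD; exact HD).
  assert (HK : 0 < INR D / mu0 ^ 2) by (apply Rdiv_lt_0_compat; [lra | apply pow_lt, Hmu0]).
  assert (Hc : 0 < mu0 / INR D) by (apply Rdiv_lt_0_compat; lra).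
  assert (Hn : 0 < INR D - 1) by lra.
  rewrite F_RF_eq_F_psi by assumption.
  split; [apply F_psi_is_CD_function; assumption|].
  split; [apply F_psi_strictly_convex; assumption|].
  (* the inequality holds without the positivity of Lv(x) *)
  intros x v _ Hmax. destruct (Hrf x) as [eta [Heta_adj [Heta_inj Heta_comm]]].
  apply Rle_ge, (Lap_Psi_ge_psi V adj nb D adj_sym Hreg x eta Heta_adj Heta_inj Heta_comm
    mu mu0 v Hmu HD Hmu0 Hmax).
Qed.
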